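(* Let $\Bbbk$ be a field, $H$ a Hopf $\Bbbk$-algebra with bijective antipode, and $A$ a left $H$-module $\Bbbk$-algebra. For $q\in\operatorname{Q} A$ let $D_q=\{ a \in A \mid qAa \subseteq A \text{ and } aAq \subseteq A \}$, and define \[ \operatorname{Q}^H A = \{ q \in \operatorname{Q} A \mid h.(dq) = (h.d)q \text{ and } h.(qd) = q(h.d) \text{ for all } h \in H,\ d \in D_q \}. \] Let $\mathscr{E}^H$ be the set of two-sided ideals of $A$ that are $H$-submodules and have zero left and right annihilator in $A$. Then: (a) $D_q \in \mathscr{E}^H$ for every $q \in \operatorname{Q}^H A$. (b) Let $q \in \operatorname{Q} A$. If there is some $I \in \mathscr{E}^H$ with $I \subseteq D_q$ such that $h.(aq) = (h.a)q$ and $h.(qa) = q(h.a)$ for all $h \in H$ and $a \in I$, then $q \in \operatorname{Q}^H A$. (c) $\operatorname{Q}^H A$ is a subalgebra of $\operatorname{Q} A$, and $A^H \subseteq \operatorname{Q}^H A$, where $A^H=\{a\in A \mid h.a=\varepsilon(h)a \ \forall h\in H\}$.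
   Context: A left $H$-module algebra is a $\Bbbk$-algebra $A$ with $1$ that is a left $H$-module via $h\otimes a\mapsto h.a$ such that $h.(ab)=(h_1.a)(h_2.b)$ (Sweedler notation $\Delta h=h_1\otimes h_2$) and $h.1=\varepsilon(h)1$, where $\varepsilon$ is the counit of $H$. $\operatorname{Q} A$ denotes the symmetric (Martindale) ring of quotients of $A$; $A$ is a subring of $\operatorname{Q} A$, and for $q \in \operatorname{Q} A$ the set $D_q$ is a two-sided ideal of $A$ with zero left and right annihilator. *)

From HB Require Import structures.
From mathcomp Require Import all_boot all_order all_algebra.
Set Implicit Arguments. Unset Strict Implicit. Unset Printing Implicit Defensive.
Import GRing.Theory.
Local Open Scope ring_scope.

Section HopfDefs.
Variables (k : fieldType) (H : algType k).

(* A finite list s of pairs represents the element sum_(p in s) p.1 (x) p.2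
   of H (x) H.  Two such representatives denote the same tensor iff they have
   the same image under every k-bilinear map into every k-vector space
   (universal property of the tensor product). *)
Definition bilinear_map (V : lmodType k) (phi : H -> H -> V) : Prop :=
  (forall y (c : k) x1 x2, phi (c *: x1 + x2) y = c *: phi x1 y + phi x2 y) /\
  (forall x (c : k) y1 y2, phi x (c *: y1 + y2) = c *: phi x y1 + phi x y2).

Definition trilinear_map (V : lmodType k) (phi : H -> H -> H -> V) : Prop :=
  [/\ (forall y z (c : k) x1 x2,
         phi (c *: x1 + x2) y z = c *: phi x1 y z + phi x2 y z),
      (forall x z (c : k) y1 y2,
         phi x (c *: y1 + y2) z = c *: phi x y1 z + phi x y2 z) &
      (forall x y (c : k) z1 z2,
         phi x y (c *: z1 + z2) = c *: phi x y z1 + phi x y z2)].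

Definition teq2 (s t : seq (H * H)) : Prop :=
  forall (V : lmodType k) (phi : H -> H -> V), bilinear_map phi ->
    \sum_(p <- s) phi p.1 p.2 = \sum_(p <- t) phi p.1 p.2.

Definition teq3 (s t : seq (H * H * H)) : Prop :=
  forall (V : lmodType k) (phi : H -> H -> H -> V), trilinear_map phi ->
    \sum_(p <- s) phi p.1.1 p.1.2 p.2 = \sum_(p <- t) phi p.1.1 p.1.2 p.2.

(* (H, cop, eps, S) is a Hopf algebra over k; cop h is a representative of
   Delta h in Sweedler form: Delta h = sum_(p <- cop h) p.1 (x) p.2. *)
Definition is_hopf_algebra (cop : H -> seq (H * H)) (eps : H -> k)
    (S : H -> H) : Prop :=
  [/\
      (forall (c : k) x y,
         teq2 (cop (c *: x + y)) ([seq (c *: p.1, p.2) | p <- cop x] ++ cop y)),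
      (forall x y, teq2 (cop (x * y))
                        [seq (p.1 * r.1, p.2 * r.2) | p <- cop x, r <- cop y])
      /\ teq2 (cop 1) [:: (1, 1)],
      (forall h, teq3 [seq (r.1, r.2, p.2) | p <- cop h, r <- cop p.1]
                      [seq (p.1, r.1, r.2) | p <- cop h, r <- cop p.2]),
      [/\ (forall (c : k) x y, eps (c *: x + y) = c * eps x + eps y),
          (forall x y, eps (x * y) = eps x * eps y), eps 1 = 1,
          (forall h, \sum_(p <- cop h) eps p.1 *: p.2 = h) &
          (forall h, \sum_(p <- cop h) eps p.2 *: p.1 = h)] &
      [/\ (forall (c : k) x y, S (c *: x + y) = c *: S x + S y),
          (forall h, \sum_(p <- cop h) S p.1 * p.2 = eps h *: 1) &
          (forall h, \sum_(p <- cop h) p.1 * S p.2 = eps h *: 1)]].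

End HopfDefs.

Section ModuleAlgebra.
Variables (k : fieldType) (H : algType k) (A : algType k).

Definition is_module_algebra (cop : H -> seq (H * H)) (eps : H -> k)
    (act : H -> A -> A) : Prop :=
  [/\ (forall a (c : k) g h, act (c *: g + h) a = c *: act g a + act h a),
      (forall h (c : k) a b, act h (c *: a + b) = c *: act h a + act h b),
      (forall a, act 1 a = a) /\ (forall g h a, act (g * h) a = act g (act h a)),
      (forall h a b, act h (a * b) = \sum_(p <- cop h) act p.1 a * act p.2 b) &
      (forall h, act h 1 = eps h *: 1)].

Definition is_twosided_ideal (I : A -> Prop) : Prop :=
  [/\ I 0, (forall x y, I x -> I y -> I (x + y)) &
      (forall a x, I x -> I (a * x) /\ I (x * a))].

Definition zero_lann (I : A -> Prop) : Prop :=
  forall a, (forall x, I x -> a * x = 0) -> a = 0.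
Definition zero_rann (I : A -> Prop) : Prop :=
  forall a, (forall x, I x -> x * a = 0) -> a = 0.

Definition dense_ideal (I : A -> Prop) : Prop :=
  [/\ is_twosided_ideal I, zero_lann I & zero_rann I].

Definition H_stable (act : H -> A -> A) (I : A -> Prop) : Prop :=
  forall h x, I x -> I (act h x).

Definition EH (act : H -> A -> A) (I : A -> Prop) : Prop :=
  dense_ideal I /\ H_stable act I.

Definition invariants (eps : H -> k) (act : H -> A -> A) (a : A) : Prop :=
  forall h, act h a = eps h *: a.

End ModuleAlgebra.

Section Quotients.
Variables (k : fieldType) (A Q : algType k) (iota : {lrmorphism A -> Q}).

Definition inA (q : Q) : Prop := exists a, iota a = q.

(* (Q, iota) is the symmetric Martindale ring of quotients of A (with respect
   to the filter of ideals with zero left and right annihilators),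
   characterised up to isomorphism over A by the usual four properties. *)
Definition is_sym_ring_of_quotients : Prop :=
  [/\ injective iota,
      (forall q : Q, exists I, dense_ideal I /\
         (forall x, I x -> inA (iota x * q) /\ inA (q * iota x))),
      (forall (q : Q) I, dense_ideal I ->
         ((forall x, I x -> iota x * q = 0) \/ (forall x, I x -> q * iota x = 0))
         -> q = 0) &
      (forall I (f g : A -> A), dense_ideal I ->
         (forall x y, I x -> I y -> f (x + y) = f x + f y) ->
         (forall a x, I x -> f (a * x) = a * f x) ->
         (forall x y, I x -> I y -> g (x + y) = g x + g y) ->
         (forall a x, I x -> g (x * a) = g x * a) ->
         (forall x y, I x -> I y -> f x * y = x * g y) ->
         exists q : Q, forall x, I x -> iota x * q = iota (f x) /\
                                        q * iota x = iota (g x))].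

Definition Dq (q : Q) (a : A) : Prop :=
  forall b, inA (q * iota b * iota a) /\ inA (iota a * iota b * q).

Variables (H : algType k) (act : H -> A -> A).

(* Q^H A: h.(dq) = (h.d)q and h.(qd) = q(h.d) for h in H, d in D_q
   (dq and qd lie in A for d in D_q; x denotes the element of A they equal) *)
Definition QH (q : Q) : Prop :=
  forall h d, Dq q d ->
    (forall x, iota x = iota d * q -> iota (act h x) = iota (act h d) * q) /\
    (forall x, iota x = q * iota d -> iota (act h x) = q * iota (act h d)).

Definition is_subalgebra (S : Q -> Prop) : Prop :=
  [/\ S 1, (forall p q, S p -> S q -> S (p + q)),
      (forall p q, S p -> S q -> S (p * q)) &
      (forall (c : k) q, S q -> S (c *: q))].

End Quotients.

From HB Require Import structures.
From mathcomp Require Import all_boot all_order all_algebra.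
Set Implicit Arguments. Unset Strict Implicit. Unset Printing Implicit Defensive.
Import GRing.Theory.
Local Open Scope ring_scope.

(* Everything rests on the two shifting rules of a module algebra,
     (h.z) b = sum h_1.(z (S h_2).b)   and   b (h.z) = sum h_2.((S^-1 h_1).b z),
   the second being where bijectivity of the antipode is needed.  They show
   that D_q is H-stable when q is in Q^H A, and that an identity
   h.x = (h.d) q (or h.x = q (h.d)) in Q A can be tested after multiplying by
   the elements of any H-stable ideal with zero annihilators.  Choosing that
   ideal to be some D_p reduces each closure property of Q^H A to products
   e d with e in D_p, for which the terms involved lie in A. *)

Section LinearFun.
Variables (k : fieldType) (U V W : lmodType k).

Section LinearMorphism.
Variables (f : U -> V) (fL : linear f).

Lemma linear0_of : f 0 = 0.
Proof.
case/GRing.semilinear_linear: fL => fZ _.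
by rewrite -[X in f X](scale0r (0 : U)) fZ /= scale0r.
Qed.
Lemma linearD_of : {morph f : x y / x + y}.
Proof. by case/GRing.semilinear_linear: fL. Qed.
Lemma linearZ_of : scalable f.
Proof. by case/GRing.semilinear_linear: fL. Qed.
Lemma linear_sum_of (I : Type) (r : seq I) (F : I -> U) :
  f (\sum_(i <- r) F i) = \sum_(i <- r) f (F i).
Proof. exact: (big_morph f linearD_of linear0_of). Qed.
End LinearMorphism.

Lemma linear_comp_fun (f : U -> V) (g : V -> W) :
  linear f -> linear g -> linear (fun x => g (f x)).
Proof. by move=> fL gL c x y; rewrite fL gL. Qed.
Lemma linear_sum_fun (I : Type) (r : seq I) (G : I -> U -> V) :
  (forall i, linear (G i)) -> linear (fun x => \sum_(i <- r) G i x).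
Proof.
by move=> GL c x y; rewrite scaler_sumr -big_split; apply: eq_bigr => i _; rewrite GL.
Qed.
Lemma linear_id_fun : linear (fun x : U => x).
Proof. by []. Qed.
End LinearFun.

Section LinearMul.
Variables (k : fieldType) (B : algType k) (V : lmodType k) (f : V -> B).
Hypothesis fL : linear f.
Lemma linear_mull_fun (v : B) : linear (fun x => f x * v).
Proof. by move=> c x y; rewrite fL mulrDl scalerAl. Qed.
Lemma linear_mulr_fun (v : B) : linear (fun x => v * f x).
Proof. by move=> c x y; rewrite fL mulrDr scalerAr. Qed.
End LinearMul.

Ltac linearity_with tac := repeat first
  [ exact: linear_id_fun
  | apply: linear_sum_fun => ?
  | apply: linear_mull_fun
  | apply: linear_mulr_fun
  | tac ].

Section Hopf.
Variables (k : fieldType) (H : algType k) (cop : H -> seq (H * H))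
  (eps : H -> k) (S : H -> H).
Hypothesis hH : is_hopf_algebra cop eps S.

Lemma bilinear_map_of (V : lmodType k) (phi : H -> H -> V) :
  (forall y, linear (phi^~ y)) -> (forall x, linear (phi x)) -> bilinear_map phi.
Proof. by move=> phiL1 phiL2; split=> *; [apply: phiL1 | apply: phiL2]. Qed.

Lemma trilinear_map_of (V : lmodType k) (phi : H -> H -> H -> V) :
  (forall y z, linear (fun x => phi x y z)) ->
  (forall x z, linear (fun y => phi x y z)) ->
  (forall x y, linear (phi x y)) -> trilinear_map phi.
Proof.
by move=> phiL1 phiL2 phiL3; split=> *; [apply: phiL1 | apply: phiL2 | apply: phiL3].
Qed.

Lemma coassoc h (V : lmodType k) (phi : H -> H -> H -> V) : trilinear_map phi ->
  \sum_(p <- cop h) \sum_(r <- cop p.1) phi r.1 r.2 p.2 =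
  \sum_(p <- cop h) \sum_(r <- cop p.2) phi p.1 r.1 r.2.
Proof. by case: hH => _ _ coA _ _ /(coA h V phi); rewrite !big_allpairs_dep. Qed.

Lemma copM x y (V : lmodType k) (phi : H -> H -> V) : bilinear_map phi ->
  \sum_(u <- cop (x * y)) phi u.1 u.2 =
  \sum_(p <- cop x) \sum_(r <- cop y) phi (p.1 * r.1) (p.2 * r.2).
Proof. by case: hH => _ [copM _] _ _ _ /(copM x y V phi) ->; rewrite big_allpairs_dep. Qed.

Lemma cop1 (V : lmodType k) (phi : H -> H -> V) : bilinear_map phi ->
  \sum_(u <- cop 1) phi u.1 u.2 = phi 1 1.
Proof. by case: hH => _ [_ cop1] _ _ _ /(cop1 V phi) ->; rewrite big_seq1. Qed.

Lemma counitM x y : eps (x * y) = eps x * eps y.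
Proof. by case: hH => _ _ _ []. Qed.
Lemma counit1 : eps 1 = 1. Proof. by case: hH => _ _ _ []. Qed.
Lemma sum_counitl h : \sum_(p <- cop h) eps p.1 *: p.2 = h.
Proof. by case: hH => _ _ _ []. Qed.
Lemma sum_counitr h : \sum_(p <- cop h) eps p.2 *: p.1 = h.
Proof. by case: hH => _ _ _ []. Qed.
Lemma antipode_linear : linear S. Proof. by case: hH => _ _ _ _ []. Qed.
Lemma sum_antipodel h : \sum_(p <- cop h) S p.1 * p.2 = eps h *: 1.
Proof. by case: hH => _ _ _ _ []. Qed.
Lemma sum_antipoder h : \sum_(p <- cop h) p.1 * S p.2 = eps h *: 1.
Proof. by case: hH => _ _ _ _ []. Qed.

Lemma linear_antipode_fun (V : lmodType k) (f : V -> H) :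
  linear f -> linear (fun x => S (f x)).
Proof. by move=> fL; apply: (linear_comp_fun fL antipode_linear). Qed.

Lemma sum_counitl_linear (V : lmodType k) (f : H -> V) h : linear f ->
  \sum_(p <- cop h) eps p.1 *: f p.2 = f h.
Proof.
move=> fL; rewrite -{2}(sum_counitl h) (linear_sum_of fL).
by apply: eq_bigr => p _; rewrite (linearZ_of fL).
Qed.

Lemma sum_counitr_linear (V : lmodType k) (f : H -> V) h : linear f ->
  \sum_(p <- cop h) eps p.2 *: f p.1 = f h.
Proof.
move=> fL; rewrite -{2}(sum_counitr h) (linear_sum_of fL).
by apply: eq_bigr => p _; rewrite (linearZ_of fL).
Qed.

Ltac hopf_linearity := linearity_with ltac:(apply: linear_antipode_fun).

Lemma antipode1 : S 1 = 1.
Proof.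
have := sum_antipodel 1; rewrite counit1 scale1r (@cop1 H (fun a b => S a * b)) ?mulr1 //.
by apply: bilinear_map_of => *; hopf_linearity.
Qed.

Lemma trilinear_map_sum (I : Type) (r : seq I) (V : lmodType k)
    (phi : I -> H -> H -> H -> V) :
  (forall i, trilinear_map (phi i)) ->
  trilinear_map (fun x y z => \sum_(i <- r) phi i x y z).
Proof.
move=> phiL; split=> *; rewrite scaler_sumr -big_split; apply: eq_bigr => i _;
  by case: (phiL i) => L1 L2 L3; rewrite ?L1 ?L2 ?L3.
Qed.

Lemma coassoc2 x y (V : lmodType k) (phi : H -> H -> H -> H -> H -> H -> V) :
  (forall a' b' c', trilinear_map (fun a b c => phi a b c a' b' c')) ->
  (forall a b c, trilinear_map (phi a b c)) ->
  \sum_(p <- cop x) \sum_(p' <- cop p.1) \sum_(r <- cop y) \sum_(r' <- cop r.1)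
    phi p'.1 p'.2 p.2 r'.1 r'.2 r.2 =
  \sum_(p <- cop x) \sum_(p' <- cop p.2) \sum_(r <- cop y) \sum_(r' <- cop r.2)
    phi p.1 p'.1 p'.2 r.1 r'.1 r'.2.
Proof.
move=> phiL1 phiL2.
rewrite (@coassoc x _ (fun a b c =>
  \sum_(r <- cop y) \sum_(r' <- cop r.1) phi a b c r'.1 r'.2 r.2)); last first.
  by do 2 apply: trilinear_map_sum => ?.
by apply: eq_bigr => p _; apply: eq_bigr => p' _; apply: coassoc.
Qed.

Lemma sum_antipoder_mul h u v : \sum_(p <- cop h) u * p.1 * (S p.2 * v) = eps h *: (u * v).
Proof.
under eq_bigr do rewrite mulrA -(mulrA u).
by rewrite -mulr_suml -mulr_sumr sum_antipoder -scalerAr mulr1 scalerAl.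
Qed.

Lemma counitM_antipode a b v :
  eps (a * b) *: v =
  \sum_(p <- cop a) \sum_(r <- cop b) S (p.1 * r.1) * (p.2 * r.2) * v.
Proof.
rewrite -[v in LHS]mul1r scalerAl -sum_antipodel mulr_suml.
rewrite (@copM _ _ _ (fun c d => S c * d * v)) //.
by apply: bilinear_map_of => *; hopf_linearity.
Qed.

Lemma antipodeM x y : S (x * y) = S y * S x.
Proof.
(* Both sides equal sum S(x_1 y_1) x_2 y_2 S(y_3) S(x_3). *)
pose phi a b c a' b' c' := S (a * a') * (b * b') * (S c' * S c).
have phiL1 a' b' c' : trilinear_map (fun a b c => phi a b c a' b' c').
  by apply: trilinear_map_of => *; hopf_linearity.
have phiL2 a b c : trilinear_map (phi a b c).
  by apply: trilinear_map_of => *; hopf_linearity.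
have expand_l : S y * S x =
    \sum_(p <- cop x) \sum_(p' <- cop p.1) \sum_(r <- cop y) \sum_(r' <- cop r.1)
      phi p'.1 p'.2 p.2 r'.1 r'.2 r.2.
  rewrite -(@sum_counitl_linear _ (fun h => S y * S h)); last by hopf_linearity.
  apply: eq_bigr => p _.
  rewrite -(@sum_counitl_linear _ (fun h => S h * S p.2)); last by hopf_linearity.
  rewrite scaler_sumr exchange_big /=; apply: eq_bigr => r _.
  by rewrite scalerA -counitM counitM_antipode.
have contract_r :
    \sum_(p <- cop x) \sum_(p' <- cop p.2) \sum_(r <- cop y) \sum_(r' <- cop r.2)
      phi p.1 p'.1 p'.2 r.1 r'.1 r'.2 = S (x * y).
  rewrite -(@sum_counitr_linear _ (fun h => S (h * y))); last first.
    by apply: linear_antipode_fun; hopf_linearity.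
  apply: eq_bigr => p _.
  rewrite -[S (p.1 * y)]mulr1 -sum_antipoder_mul; apply: eq_bigr => p' _.
  rewrite -(@sum_counitr_linear _ (fun h => S (p.1 * h) * p'.1 * (S p'.2 * 1))); last first.
    by hopf_linearity.
  apply: eq_bigr => r _; rewrite mulr1 -sum_antipoder_mul.
  by apply: eq_bigr => r' _; rewrite /phi !mulrA.
by rewrite expand_l coassoc2 // contract_r.
Qed.

Section InverseAntipode.
Variable g : H -> H.
Hypotheses (Sg : cancel S g) (gS : cancel g S).

Lemma linear_inv_antipode : linear g.
Proof. by move=> c x y; apply: (can_inj Sg); rewrite antipode_linear !gS. Qed.

Lemma sum_inv_antipode h : \sum_(p <- cop h) p.2 * g p.1 = eps h *: 1.
Proof.
apply: (can_inj Sg); rewrite (linear_sum_of antipode_linear) (linearZ_of antipode_linear).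
by rewrite antipode1 -sum_antipoder; apply: eq_bigr => p _; rewrite antipodeM gS.
Qed.

Section ModuleAlgebra.
Variables (A : algType k) (act : H -> A -> A).
Hypothesis hA : is_module_algebra cop eps act.

Lemma act_linear_l a : linear (fun h => act h a).
Proof. by move=> c x y; case: hA => actL *; apply: actL. Qed.
Lemma act_linear_r h : linear (act h).
Proof. by move=> c x y; case: hA => _ actL *; apply: actL. Qed.
Lemma act_comp x y a : act (x * y) a = act x (act y a).
Proof. by case: hA => _ _ [_ ->]. Qed.
Lemma act_mul h a b : act h (a * b) = \sum_(p <- cop h) act p.1 a * act p.2 b.
Proof. by case: hA. Qed.
Lemma act_unit h : act h 1 = eps h *: 1.
Proof. by case: hA. Qed.

Lemma act_scale1 c a : act (c *: 1) a = c *: a.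
Proof. by case: hA => _ _ [act1 _] _ _; rewrite (linearZ_of (act_linear_l a)) act1. Qed.

Lemma linear_act_l_fun (V : lmodType k) (f : V -> H) a :
  linear f -> linear (fun x => act (f x) a).
Proof. by move=> fL; apply: (linear_comp_fun fL (act_linear_l a)). Qed.

Ltac act_linearity := linearity_with ltac:(first
  [ apply: linear_antipode_fun
  | apply: linear_act_l_fun
  | exact: linear_inv_antipode ]).

Lemma act_mulr h z b :
  act h z * b = \sum_(p <- cop h) act p.1 (z * act (S p.2) b).
Proof.
transitivity
  (\sum_(p <- cop h) \sum_(r <- cop p.1) act r.1 z * act (r.2 * S p.2) b); last first.
  by apply: eq_bigr => p _; rewrite act_mul; apply: eq_bigr => r _; rewrite act_comp.
rewrite (@coassoc h _ (fun x y w => act x z * act (y * S w) b)); last first.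
  by apply: trilinear_map_of => *; act_linearity.
rewrite -(@sum_counitr_linear _ (fun x => act x z * b)); last by act_linearity.
apply: eq_bigr => p _; rewrite -mulr_sumr -(linear_sum_of (act_linear_l b)).
by rewrite sum_antipoder act_scale1 -scalerAr.
Qed.

Lemma mulr_act h b z :
  b * act h z = \sum_(p <- cop h) act p.2 (act (g p.1) b * z).
Proof.
transitivity
  (\sum_(p <- cop h) \sum_(r <- cop p.2) act (r.1 * g p.1) b * act r.2 z); last first.
  by apply: eq_bigr => p _; rewrite act_mul; apply: eq_bigr => r _; rewrite act_comp.
rewrite -(@coassoc h _ (fun x y w => act (y * g x) b * act w z)); last first.
  by apply: trilinear_map_of => *; act_linearity.
rewrite -(@sum_counitl_linear _ (fun x => b * act x z)); last by act_linearity.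
apply: eq_bigr => p _; rewrite -mulr_suml -(linear_sum_of (act_linear_l b)).
by rewrite sum_inv_antipode act_scale1 -scalerAl.
Qed.

End ModuleAlgebra.
End InverseAntipode.
End Hopf.

Section SymmetricQuotients.
Variables (k : fieldType) (A Q : algType k) (iota : {lrmorphism A -> Q}).
Hypothesis hQ : is_sym_ring_of_quotients iota.

Lemma iota_inj : injective iota. Proof. by case: hQ. Qed.

Lemma inA_iota a : inA iota (iota a). Proof. by exists a. Qed.
Lemma inAD u v : inA iota u -> inA iota v -> inA iota (u + v).
Proof. by move=> [a <-] [b <-]; exists (a + b); rewrite rmorphD. Qed.
Lemma inA_sum (I : Type) (r : seq I) (F : I -> Q) :
  (forall i, inA iota (F i)) -> inA iota (\sum_(i <- r) F i).
Proof.
move=> FA; elim: r => [|i r IH]; first by rewrite big_nil -(rmorph0 iota); apply: inA_iota.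
by rewrite big_cons; apply: inAD.
Qed.
Lemma inAMl a u : inA iota u -> inA iota (iota a * u).
Proof. by move=> [b <-]; rewrite -rmorphM; apply: inA_iota. Qed.
Lemma inAMr a u : inA iota u -> inA iota (u * iota a).
Proof. by move=> [b <-]; rewrite -rmorphM; apply: inA_iota. Qed.

Lemma dense_lann (I : A -> Prop) (z : Q) : dense_ideal I ->
  (forall e, I e -> iota e * z = 0) -> z = 0.
Proof. by case: hQ => _ _ ann _ denseI z0; apply: (ann z I denseI); left. Qed.
Lemma dense_rann (I : A -> Prop) (z : Q) : dense_ideal I ->
  (forall e, I e -> z * iota e = 0) -> z = 0.
Proof. by case: hQ => _ _ ann _ denseI z0; apply: (ann z I denseI); right. Qed.

Lemma Dq_inAl q a : Dq iota q a -> inA iota (iota a * q).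
Proof. by case/(_ 1) => _; rewrite rmorph1 mulr1. Qed.
Lemma Dq_inAr q a : Dq iota q a -> inA iota (q * iota a).
Proof. by case/(_ 1) => + _; rewrite rmorph1 mulr1. Qed.

Lemma Dq_ideal q : is_twosided_ideal (Dq iota q).
Proof.
split.
- by move=> b; rewrite rmorph0 mulr0 !mul0r -(rmorph0 iota); split; apply: inA_iota.
- move=> x y Dx Dy b; have [? ?] := Dx b; have [? ?] := Dy b.
  by rewrite rmorphD mulrDr !mulrDl; split; apply: inAD.
- move=> a x Dx; split=> b; rewrite rmorphM; split.
  + by rewrite mulrA -(mulrA q) -rmorphM; case: (Dx (b * a)).
  + by rewrite -!mulrA; apply: inAMl; rewrite !mulrA; case: (Dx b).
  + by rewrite mulrA; apply: inAMr; case: (Dx b).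
  + by rewrite -(mulrA (iota x)) -rmorphM; case: (Dx (a * b)).
Qed.

Lemma Dq_dense q : dense_ideal (Dq iota q).
Proof.
case: hQ => _ /(_ q) [I [[[_ _ IM] lannI rannI] IqA]] _ _.
have ID x : I x -> Dq iota q x.
  move=> Ix b; split; first by rewrite -mulrA -rmorphM; case: (IqA _ (proj1 (IM b x Ix))).
  by rewrite -rmorphM; case: (IqA _ (proj2 (IM b x Ix))).
split; first exact: Dq_ideal.
  by move=> a aD; apply: lannI => x /ID; apply: aD.
by move=> a aD; apply: rannI => x /ID; apply: aD.
Qed.

End SymmetricQuotients.

Section InvariantQuotients.
Variables (k : fieldType) (H : algType k) (cop : H -> seq (H * H)) (eps : H -> k).
Variables (S g : H -> H).
Hypotheses (hH : is_hopf_algebra cop eps S) (Sg : cancel S g) (gS : cancel g S).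
Variables (A : algType k) (act : H -> A -> A).
Hypothesis hA : is_module_algebra cop eps act.
Variables (Q : algType k) (iota : {lrmorphism A -> Q}).
Hypothesis hQ : is_sym_ring_of_quotients iota.

Definition lcompat q h a :=
  forall x, iota x = iota a * q -> iota (act h x) = iota (act h a) * q.
Definition rcompat q h a :=
  forall x, iota x = q * iota a -> iota (act h x) = q * iota (act h a).

Lemma EH_mull I a x : EH act I -> I x -> I (a * x).
Proof. by move=> [[[_ _ IM] _ _] _] /(IM a) []. Qed.
Lemma EH_mulr I a x : EH act I -> I x -> I (x * a).
Proof. by move=> [[[_ _ IM] _ _] _] /(IM a) []. Qed.

Lemma Dq_H_stable q : QH iota act q -> H_stable act (Dq iota q).
Proof.
move=> qQH h d Dd b; have [_ _ DM] := Dq_ideal iota q; split.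
- rewrite -mulrA -rmorphM (mulr_act hH Sg gS hA) rmorph_sum mulr_sumr.
  apply: inA_sum => p; have De : Dq iota q (act (g p.1) b * d) by exact: (DM _ _ Dd).1.
  by have [y yE] := Dq_inAr De; rewrite -((qQH p.2 _ De).2 y yE); apply: inA_iota.
- rewrite -rmorphM (act_mulr hH hA) rmorph_sum mulr_suml.
  apply: inA_sum => p; have De : Dq iota q (d * act (S p.2) b) by exact: (DM _ _ Dd).2.
  by have [y yE] := Dq_inAl De; rewrite -((qQH p.1 _ De).1 y yE); apply: inA_iota.
Qed.

Lemma EH_Dq q : QH iota act q -> EH act (Dq iota q).
Proof. by move=> qQH; split; [apply: Dq_dense | apply: Dq_H_stable]. Qed.

Lemma lcompat_of_ideal K q d : EH act K ->
  (forall e h, K e -> lcompat q h (e * d)) -> forall h, lcompat q h d.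
Proof.
move=> [denseK KH] Kc h x xE; apply/eqP; rewrite -subr_eq0; apply/eqP.
apply: (dense_lann hQ denseK) => e Ke.
rewrite mulrBr mulrA -!rmorphM !(mulr_act hH Sg gS hA) !rmorph_sum mulr_suml.
apply/eqP; rewrite subr_eq0; apply/eqP; apply: eq_bigr => p _.
by apply: Kc; [exact: KH | rewrite !rmorphM /= xE mulrA].
Qed.

Lemma rcompat_of_ideal K q d : EH act K ->
  (forall e h, K e -> rcompat q h (d * e)) -> forall h, rcompat q h d.
Proof.
move=> [denseK KH] Kc h x xE; apply/eqP; rewrite -subr_eq0; apply/eqP.
apply: (dense_rann hQ denseK) => e Ke.
rewrite mulrBl -mulrA -!rmorphM !(act_mulr hH hA) !rmorph_sum mulr_sumr.
apply/eqP; rewrite subr_eq0; apply/eqP; apply: eq_bigr => p _.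
by apply: Kc; [exact: KH | rewrite !rmorphM /= xE mulrA].
Qed.

Lemma QH_lcompat q h a : QH iota act q -> lcompat q h a.
Proof.
move=> qQH; apply: (lcompat_of_ideal (EH_Dq qQH)) => e h' De.
exact: (qQH h' _ (EH_mulr a (EH_Dq qQH) De)).1.
Qed.

Lemma QH_rcompat q h a : QH iota act q -> rcompat q h a.
Proof.
move=> qQH; apply: (rcompat_of_ideal (EH_Dq qQH)) => e h' De.
exact: (qQH h' _ (EH_mull a (EH_Dq qQH) De)).2.
Qed.

Lemma QH_of_ideal q I : EH act I ->
  (forall h a, I a -> lcompat q h a /\ rcompat q h a) -> QH iota act q.
Proof.
move=> EI Ic h d _; split.
- by apply: (lcompat_of_ideal EI) => e h' Ie; case: (Ic h' _ (EH_mulr d EI Ie)).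
- by apply: (rcompat_of_ideal EI) => e h' Ie; case: (Ic h' _ (EH_mull d EI Ie)).
Qed.

Lemma lcompatD p q h a : lcompat p h a -> lcompat q h a ->
  inA iota (iota a * p) -> lcompat (p + q) h a.
Proof.
move=> pc qc [y yE] x xE.
have x_yE : iota (x - y) = iota a * q by rewrite rmorphB /= xE yE mulrDr addrC addKr.
rewrite -(subrK y x) (linearD_of (act_linear_r hA h)) rmorphD /= (qc _ x_yE) (pc _ yE).
by rewrite -mulrDr addrC.
Qed.

Lemma rcompatD p q h a : rcompat p h a -> rcompat q h a ->
  inA iota (p * iota a) -> rcompat (p + q) h a.
Proof.
move=> pc qc [y yE] x xE.
have x_yE : iota (x - y) = q * iota a by rewrite rmorphB /= xE yE mulrDl addrC addKr.
rewrite -(subrK y x) (linearD_of (act_linear_r hA h)) rmorphD /= (qc _ x_yE) (pc _ yE).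
by rewrite -mulrDl addrC.
Qed.

Lemma lcompatM p q h a : lcompat p h a -> inA iota (iota a * p) ->
  (forall y, lcompat q h y) -> lcompat (p * q) h a.
Proof.
move=> pc [y yE] qc x xE.
by rewrite (qc y x); [rewrite (pc _ yE) mulrA | rewrite xE yE mulrA].
Qed.

Lemma rcompatM p q h a : rcompat q h a -> inA iota (q * iota a) ->
  (forall y, rcompat p h y) -> rcompat (p * q) h a.
Proof.
move=> qc [y yE] pc x xE.
by rewrite (pc y x); [rewrite (qc _ yE) mulrA | rewrite xE yE mulrA].
Qed.

Lemma lcompatZ c q h a : lcompat q h a -> inA iota (iota a * q) ->
  lcompat (c *: q) h a.
Proof.
move=> qc [y yE] x xE.
have -> : x = c *: y by apply: (iota_inj hQ); rewrite linearZ /= yE xE -scalerAr.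
by rewrite (linearZ_of (act_linear_r hA h)) linearZ /= (qc _ yE) -scalerAr.
Qed.

Lemma rcompatZ c q h a : rcompat q h a -> inA iota (q * iota a) ->
  rcompat (c *: q) h a.
Proof.
move=> qc [y yE] x xE.
have -> : x = c *: y by apply: (iota_inj hQ); rewrite linearZ /= yE xE -scalerAl.
by rewrite (linearZ_of (act_linear_r hA h)) linearZ /= (qc _ yE) -scalerAl.
Qed.

Lemma QH_invariant a : invariants eps act a -> QH iota act (iota a).
Proof.
move=> aI h d _; split=> x; rewrite -rmorphM => /(iota_inj hQ) ->;
  rewrite -rmorphM (act_mul hA); congr (iota _).
- rewrite -(sum_counitr_linear hH (f := fun x => act x d * a) h); last first.
    by apply: linear_mull_fun; apply: (act_linear_l hA).
  by apply: eq_bigr => p _; rewrite aI -scalerAr.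
- rewrite -(sum_counitl_linear hH (f := fun x => a * act x d) h); last first.
    by apply: linear_mulr_fun; apply: (act_linear_l hA).
  by apply: eq_bigr => p _; rewrite aI -scalerAl.
Qed.

Lemma QH1 : QH iota act 1.
Proof. by rewrite -(rmorph1 iota); apply: QH_invariant => h; apply: (act_unit hA). Qed.

Lemma QHD p q : QH iota act p -> QH iota act q -> QH iota act (p + q).
Proof.
move=> pQH qQH h d _; have EDp := EH_Dq pQH; split.
- apply: (lcompat_of_ideal EDp) => e h' De.
  by apply: lcompatD; [apply: QH_lcompat.. | apply/Dq_inAl/(EH_mulr d EDp De)].
- apply: (rcompat_of_ideal EDp) => e h' De.
  by apply: rcompatD; [apply: QH_rcompat.. | apply/Dq_inAr/(EH_mull d EDp De)].
Qed.

Lemma QHM p q : QH iota act p -> QH iota act q -> QH iota act (p * q).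
Proof.
move=> pQH qQH h d _; have EDp := EH_Dq pQH; have EDq := EH_Dq qQH; split.
- apply: (lcompat_of_ideal EDp) => e h' De.
  apply: lcompatM; [exact: QH_lcompat | apply/Dq_inAl/(EH_mulr d EDp De) |].
  by move=> y; apply: QH_lcompat.
- apply: (rcompat_of_ideal EDq) => e h' De.
  apply: rcompatM; [exact: QH_rcompat | apply/Dq_inAr/(EH_mull d EDq De) |].
  by move=> y; apply: QH_rcompat.
Qed.

Lemma QHZ c q : QH iota act q -> QH iota act (c *: q).
Proof.
move=> qQH h d _; have EDq := EH_Dq qQH; split.
- apply: (lcompat_of_ideal EDq) => e h' De.
  by apply: lcompatZ; [apply: QH_lcompat | apply/Dq_inAl/(EH_mulr d EDq De)].
- apply: (rcompat_of_ideal EDq) => e h' De.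
  by apply: rcompatZ; [apply: QH_rcompat | apply/Dq_inAr/(EH_mull d EDq De)].
Qed.

Lemma QH_subalgebra : is_subalgebra (QH iota act).
Proof. by split; [apply: QH1 | apply: QHD | apply: QHM | apply: QHZ]. Qed.

End InvariantQuotients.

Theorem lemma2p1 (k : fieldType) (H : algType k)
    (cop : H -> seq (H * H)) (eps : H -> k) (S : H -> H)
    (hH : is_hopf_algebra cop eps S) (hS : bijective S)
    (A : algType k) (act : H -> A -> A)
    (hA : is_module_algebra cop eps act)
    (Q : algType k) (iota : {lrmorphism A -> Q})
    (hQ : is_sym_ring_of_quotients iota) :
  [/\ (* (a) *)
      (forall q, QH iota act q -> EH act (Dq iota q)),
      (* (b) *)
      (forall (q : Q) (I : A -> Prop), EH act I ->
         (forall a, I a -> Dq iota q a) ->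
         (forall h a, I a ->
            (forall x, iota x = iota a * q -> iota (act h x) = iota (act h a) * q) /\
            (forall x, iota x = q * iota a -> iota (act h x) = q * iota (act h a))) ->
         QH iota act q) &
      (* (c) *)
      is_subalgebra (QH iota act) /\
      (forall a, invariants eps act a -> QH iota act (iota a))].
Proof.
have [g Sg gS] := hS; split.
- by move=> q; apply: (EH_Dq hH Sg gS hA hQ).
-
  by move=> q I EI _; apply: (QH_of_ideal hH Sg gS hA hQ EI).
- by split; [apply: (QH_subalgebra hH Sg gS hA hQ) | apply: (QH_invariant hH hA hQ)].
Qed.
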